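(* Let $s\in\mathbb R$, $p,q\in(0,+\infty]$ and $\mathcal C\in b^{s,q}_p$. Then $\delta_{\mathcal C}(x)\le \frac dp-s$ for every $x\in\mathbb R^d$, and for every $\gamma\in[-s,-s+\frac dp]$, $$\dim_H\{x\in\mathbb R^d:\ \delta_{\mathcal C}(x)\ge\gamma\}\le d-sp-\gamma p,$$ where $\dim_H$ denotes Hausdorff dimension.
   Context: Fix integers $d\ge1$, $N\ge1$ and bounded functions $\psi^{(1)},\dots,\psi^{(N)}:\mathbb R^d\to\mathbb C$ with fast decay (for every $n>0$ there is $C_n$ with $|\psi^{(i)}(x)|\le C_n(1+|x|)^{-n}$). The associated wavelet system is $\psi^{(i)}_{j,k}(x)=\psi^{(i)}(2^jx-k)$, $1\le i\le N$, $j\ge0$, $k\in\mathbb Z^d$. For $j\ge0$ and $k\in\mathbb Z^d$, $\lambda_{j,k}=\prod_{m=1}^d[k_m2^{-j},(k_m+1)2^{-j})$ is the dyadic cube of generation (scale) $j$; coefficients and wavelets are indexed indifferently by $(i,j,k)$ or by $(i,\lambda)$ with $\lambda=\lambda_{j,k}$, and $\Lambda_j$ denotes the set of pairs $(i,\lambda)$ with $\lambda$ of generation $j$. A sequence is a family $\mathcal C=(c^{(i)}_{j,k})$ of complex numbers. For $\gamma\in\mathbb R$, $x\in\mathbb R^d$, $\mathcal C\in D^\gamma(x)$ means there exist $C>0$ and indices $(i_n,j_n,k_n)$ with $j_n\to+\infty$ and $|c^{(i_n)}_{j_n,k_n}\psi^{(i_n)}_{j_n,k_n}(x)|\ge C2^{\gamma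 j_n}$; the divergence exponent is $\delta_{\mathcal C}(x)=\sup\{\gamma:\mathcal C\in D^\gamma(x)\}$. For $s\in\mathbb R$, $p,q\in(0,\infty]$, the sequence space $b^{s,q}_p$ consists of sequences such that $\varepsilon_j:=\big(\sum_{(i,\lambda)\in\Lambda_j}|c^{(i)}_\lambda 2^{(s-d/p)j}|^p\big)^{1/p}$ (a supremum over $\Lambda_j$ if $p=\infty$) satisfies $(\varepsilon_j)_{j\ge0}\in\ell^q$; it carries the (quasi-)norm $\|(\varepsilon_j)_j\|_{\ell^q}$. *)

From Stdlib Require Fin.
From Stdlib Require Import Reals Lra ZArith List.
Open Scope R_scope.

Inductive Rbar : Type := Finite (r : R) | p_infty | m_infty.

Definition Rbar_le (a b : Rbar) : Prop :=
  match a, b with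
  | m_infty, _ => True
  | _, p_infty => True
  | Finite x, Finite y => x <= y
  | _, _ => False
  end.

Definition is_sup_Rbar (P : R -> Prop) (v : Rbar) : Prop :=
  (forall g, P g -> Rbar_le (Finite g) v) /\
  (forall w, (forall g, P g -> Rbar_le (Finite g) w) -> Rbar_le v w).

Definition is_inf_Rbar (P : R -> Prop) (v : Rbar) : Prop :=
  (forall g, P g -> Rbar_le v (Finite g)) /\
  (forall w, (forall g, P g -> Rbar_le w (Finite g)) -> Rbar_le w v).

Inductive ext : Type := ext_fin (r : R) | ext_inf.
Definition ext_pos (p : ext) : Prop :=
  match p with ext_fin r => 0 < r | ext_inf => True end.
(* d / p, with d / oo = 0 *)
Definition d_over (d : nat) (p : ext) : R :=
  match p with ext_fin r => INR d / r | ext_inf => 0 end.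

(* x ^ y for x >= 0, y > 0 (with 0 ^ y = 0) *)
Definition pw (x y : R) : R := if Rle_dec x 0 then 0 else Rpower x y.

Definition CC := (R * R)%type.
Definition Cmod (z : CC) : R := sqrt (fst z ^ 2 + snd z ^ 2).
Definition Cmult (z w : CC) : CC :=
  (fst z * fst w - snd z * snd w, fst z * snd w + snd z * fst w).

Fixpoint sumFin (d : nat) : (Fin.t d -> R) -> R :=
  match d return (Fin.t d -> R) -> R with
  | O => fun _ => 0
  | S d' => fun f => f Fin.F1 + sumFin d' (fun i => f (Fin.FS i))
  end.

Definition Rd (d : nat) := Fin.t d -> R.
Definition Zd (d : nat) := Fin.t d -> Z.
Definition Rd_norm {d : nat} (x : Rd d) : R := sqrt (sumFin d (fun m => x m ^ 2)).
Definition Rd_dist {d : nat} (x y : Rd d) : R :=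
  sqrt (sumFin d (fun m => (x m - y m) ^ 2)).

(* Wavelets psi^{(i)} indexed by i = 0..N-1 (paper: 1..N) *)
Definition wavelets (d : nat) := nat -> Rd d -> CC.

Definition wav {d : nat} (psi : wavelets d) (i j : nat) (k : Zd d) (x : Rd d) : CC :=
  psi i (fun m => 2 ^ j * x m - IZR (k m)).

Definition bounded_wavelets {d : nat} (N : nat) (psi : wavelets d) : Prop :=
  exists B, forall i x, (i < N)%nat -> Cmod (psi i x) <= B.

Definition fast_decay {d : nat} (N : nat) (psi : wavelets d) : Prop :=
  forall n : nat, (0 < n)%nat -> exists Cn, forall i (x : Rd d), (i < N)%nat ->
    Cmod (psi i x) <= Cn / (1 + Rd_norm x) ^ n.

Definition wseq (d : nat) := nat -> nat -> Zd d -> CC.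

Definition in_D {d : nat} (N : nat) (psi : wavelets d) (c : wseq d)
    (gamma : R) (x : Rd d) : Prop :=
  exists (C : R) (iN jN : nat -> nat) (kN : nat -> Zd d),
    0 < C /\
    (forall n, (iN n < N)%nat) /\
    (forall M : nat, exists n0, forall n, (n0 <= n)%nat -> (M <= jN n)%nat) /\
    (forall n, Cmod (Cmult (c (iN n) (jN n) (kN n)) (wav psi (iN n) (jN n) (kN n) x))
               >= C * Rpower 2 (gamma * INR (jN n))).

Definition is_div_exp {d : nat} (N : nat) (psi : wavelets d) (c : wseq d)
    (x : Rd d) (v : Rbar) : Prop :=
  is_sup_Rbar (fun gamma => in_D N psi c gamma x) v.

Definition level_psum {d : nat} (c : wseq d) (s r : R) (j : nat)
    (L : list (nat * Zd d)) : R :=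
  fold_right (fun ik acc =>
     pw (Cmod (c (fst ik) j (snd ik)) * Rpower 2 ((s - INR d / r) * INR j)) r + acc) 0 L.

Definition is_eps_level {d : nat} (N : nat) (c : wseq d) (s : R) (p : ext)
    (j : nat) (e : R) : Prop :=
  match p with
  | ext_fin r =>
      exists S : R,
        is_sup_Rbar (fun v => exists L : list (nat * Zd d),
                        NoDup L /\ Forall (fun ik => (fst ik < N)%nat) L /\
                        v = level_psum c s r j L) (Finite S)
        /\ e = pw S (1 / r)
  | ext_inf =>
      is_sup_Rbar (fun v => exists i (k : Zd d), (i < N)%nat /\
                        v = Cmod (c i j k) * Rpower 2 (s * INR j)) (Finite e)
  end.

Definition in_lq (q : ext) (e : nat -> R) : Prop :=
  match q with
  | ext_fin r => exists M, forall n, sum_f_R0 (fun j => pw (e j) r) n <= M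
  | ext_inf => exists M, forall j, e j <= M
  end.

Definition in_besov {d : nat} (N : nat) (s : R) (p q : ext) (c : wseq d) : Prop :=
  exists e : nat -> R, (forall j, is_eps_level N c s p j (e j)) /\ in_lq q e.

Definition H_null {d : nat} (t : R) (E : Rd d -> Prop) : Prop :=
  forall delta eps, 0 < delta -> 0 < eps ->
    exists (U : nat -> Rd d -> Prop) (r : nat -> R),
      (forall x, E x -> exists n, U n x) /\
      (forall n, 0 <= r n <= delta) /\
      (forall n x y, U n x -> U n y -> Rd_dist x y <= r n) /\
      (forall M, sum_f_R0 (fun n => pw (r n) t) M <= eps).

Definition is_Hdim {d : nat} (E : Rd d -> Prop) (D : Rbar) : Prop :=
  is_inf_Rbar (fun t => 0 < t /\ H_null t E) D.

(* the bound d - s p - gamma p (equal to d when p = +oo, where gamma = -s) *)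
Definition dim_bound (d : nat) (s : R) (p : ext) (gamma : R) : R :=
  match p with ext_fin r => INR d - s * r - gamma * r | ext_inf => INR d end.

(* A sequence in b^{s,q}_p has |c_{i,j,k}| <= K 2^{(d/p - s) j}, and the wavelets are
   bounded, which gives delta_C <= d/p - s.
   If delta_C(x) >= gamma and g < gamma, infinitely many levels j carry a term
   |c_{i,j,k} psi_{i,j,k}(x)| >= 2^{g j}.  The coefficient of such a term is then at least
   ~ 2^{g j}, and the Besov norm allows at most ~ 2^{(d - sp - gp) j} of those at level j;
   by the fast decay of psi, x lies within 2^{-(1 - eta) j} of k 2^{-j} for any fixed
   eta > 0 once j is large.  Covering the set by these cubes for all large j gives
   H^t = 0 for every t > d - sp - gamma p.
   For p = +oo the bound is d, which holds for every subset of R^d. *)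

From Stdlib Require Import Reals Lra Lia ZArith List Classical ClassicalEpsilon FunctionalExtensionality.
Open Scope R_scope.

Lemma Cmod_ge0 z : 0 <= Cmod z.
Proof. apply sqrt_pos. Qed.

Lemma Cmod_mult z w : Cmod (Cmult z w) = Cmod z * Cmod w.
Proof.
  destruct z as [a b], w as [c e]; unfold Cmod, Cmult; simpl.
  rewrite <- sqrt_mult by nra. f_equal. ring.
Qed.

Lemma sumFin_le d (f g : Fin.t d -> R) :
  (forall m, f m <= g m) -> sumFin d f <= sumFin d g.
Proof.
  induction d as [|d IH]; simpl; intros Hfg; [lra|].
  pose proof (Hfg Fin.F1).
  pose proof (IH (fun i => f (Fin.FS i)) (fun i => g (Fin.FS i)) (fun i => Hfg (Fin.FS i))).
  lra.
Qed.

Lemma sumFin_const d a : sumFin d (fun _ => a) = INR d * a.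
Proof. induction d as [|d IH]; simpl sumFin; [simpl; ring|]. rewrite IH, S_INR. ring. Qed.

Lemma sumFin_ge0 d (f : Fin.t d -> R) : (forall m, 0 <= f m) -> 0 <= sumFin d f.
Proof.
  intros Hf. pose proof (sumFin_le d (fun _ => 0) f Hf) as H.
  rewrite sumFin_const in H. lra.
Qed.

Lemma sumFin_ge_term d (f : Fin.t d -> R) :
  (forall m, 0 <= f m) -> forall m, f m <= sumFin d f.
Proof.
  induction d as [|d IH]; intros Hf m; [inversion m|].
  revert Hf IH. pattern m. apply Fin.caseS'; simpl.
  - intros Hf _. pose proof (sumFin_ge0 d _ (fun i => Hf (Fin.FS i))). lra.
  - intros m' Hf IH. pose proof (IH _ (fun i => Hf (Fin.FS i)) m'). pose proof (Hf Fin.F1). lra.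
Qed.

Lemma Rabs_coord_le_Rd_norm d (x : Rd d) m : Rabs (x m) <= Rd_norm x.
Proof.
  unfold Rd_norm. rewrite <- sqrt_Rsqr_abs. apply sqrt_le_1_alt.
  unfold Rsqr. replace (x m * x m) with (x m ^ 2) by ring.
  apply (sumFin_ge_term d (fun m => x m ^ 2)). intros; nra.
Qed.

Lemma Rd_dist_le_cube d (x y : Rd d) w :
  0 <= w -> (forall m, Rabs (x m - y m) <= w) -> Rd_dist x y <= sqrt (INR d) * w.
Proof.
  intros Hw Hxy. unfold Rd_dist. rewrite <- (sqrt_square w) by lra.
  rewrite <- sqrt_mult by (try apply pos_INR; nra). apply sqrt_le_1_alt.
  rewrite <- sumFin_const. apply sumFin_le. intros m. specialize (Hxy m).
  pose proof (Rabs_pos (x m - y m)). rewrite <- pow2_abs. nra.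
Qed.

Lemma Rpower_gt0 x y : 0 < Rpower x y.
Proof. apply exp_pos. Qed.

Lemma Rpower2_INR n : Rpower 2 (INR n) = 2 ^ n.
Proof. apply Rpower_pow; lra. Qed.

Lemma Rpower2_mult_INR a j : Rpower 2 (a * INR j) = Rpower 2 a ^ j.
Proof. rewrite <- Rpower_mult. apply Rpower_pow, Rpower_gt0. Qed.

Lemma Rpower2_lt_1 a : a < 0 -> Rpower 2 a < 1.
Proof. intros Ha. rewrite <- (Rpower_O 2) by lra. apply Rpower_lt; lra. Qed.

Lemma Rpower2_eventually_gt a K :
  0 < a -> exists J : nat, forall j : nat, (J <= j)%nat -> K < Rpower 2 (a * INR j).
Proof.
  intros Ha.
  assert (H1 : 1 < Rpower 2 a) by (rewrite <- (Rpower_O 2) by lra; apply Rpower_lt; lra).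
  destruct (Pow_x_infinity (Rpower 2 a) ltac:(rewrite Rabs_right; lra) (K + 1)) as [J HJ].
  exists J. intros j Hj. specialize (HJ j Hj).
  rewrite Rabs_right in HJ by (left; apply pow_lt; lra).
  rewrite Rpower2_mult_INR. lra.
Qed.

Lemma INR_le_pow2 n : INR n <= 2 ^ n.
Proof.
  induction n as [|n IH]; [simpl; lra|]. rewrite S_INR. simpl.
  pose proof (pow_R1_Rle 2 n ltac:(lra)). lra.
Qed.

Lemma exists_Rpower2_ge B : exists b, B <= Rpower 2 b.
Proof.
  destruct (INR_unbounded B) as [n Hn]. exists (INR n).
  rewrite Rpower2_INR. pose proof (INR_le_pow2 n). lra.
Qed.

Lemma le_mult_Rpower2_inv x u K : x * Rpower 2 u <= K -> x <= K * Rpower 2 (- u).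
Proof.
  intros H. replace x with (x * Rpower 2 u * Rpower 2 (- u)).
  - apply Rmult_le_compat_r; [apply Rlt_le, Rpower_gt0|auto].
  - rewrite Rmult_assoc, <- Rpower_plus, Rplus_opp_r, Rpower_O; lra.
Qed.

Lemma pw_ge0 x y : 0 <= pw x y.
Proof. unfold pw. destruct (Rle_dec x 0); [lra|]. apply Rlt_le, Rpower_gt0. Qed.

Lemma pw_Rpower x y : 0 < x -> pw x y = Rpower x y.
Proof. intros H. unfold pw. destruct (Rle_dec x 0); [lra|reflexivity]. Qed.

Lemma pw_0 y : pw 0 y = 0.
Proof. unfold pw. destruct (Rle_dec 0 0); lra. Qed.

Lemma pw_le_compat a b y : 0 < y -> 0 <= a <= b -> pw a y <= pw b y.
Proof.
  intros Hy Hab. unfold pw. destruct (Rle_dec a 0), (Rle_dec b 0); try lra.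
  - apply Rlt_le, Rpower_gt0.
  - apply Rle_Rpower_l; lra.
Qed.

Lemma pw_le_bound y x M : 0 < y -> pw x y <= M -> x <= Rpower (Rabs M + 1) (/ y).
Proof.
  intros Hy H. destruct (Rle_dec x 0). { pose proof (Rpower_gt0 (Rabs M + 1) (/ y)). lra. }
  rewrite pw_Rpower in H by lra.
  replace x with (Rpower (Rpower x y) (/ y))
    by (rewrite Rpower_mult, Rinv_r, Rpower_1; lra).
  apply Rle_Rpower_l; [left; apply Rinv_0_lt_compat; auto|].
  split; [apply Rpower_gt0|]. pose proof (Rle_abs M). lra.
Qed.

Lemma sum_f_R0_ge_last f j : (forall n, 0 <= f n) -> f j <= sum_f_R0 f j.
Proof. intros H. destruct j; simpl; [lra|]. pose proof (cond_pos_sum f j H). lra. Qed.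

Lemma in_lq_bounded q e : ext_pos q -> in_lq q e -> exists E, forall j, e j <= E.
Proof.
  destruct q as [r|]; simpl; intros Hq [M HM].
  - exists (Rpower (Rabs M + 1) (/ r)). intros j. apply pw_le_bound; auto.
    eapply Rle_trans; [|apply (HM j)].
    apply (sum_f_R0_ge_last (fun j => pw (e j) r)). intros; apply pw_ge0.
  - exists M; auto.
Qed.

Lemma besov_level_psum_bounded d N s r q (c : wseq d) :
  ext_pos q -> 0 < r -> in_besov N s (ext_fin r) q c ->
  exists M, forall j L, NoDup L -> Forall (fun ik => (fst ik < N)%nat) L ->
    level_psum c s r j L <= M.
Proof.
  intros Hq Hr [e [He Hlq]]. destruct (in_lq_bounded q e Hq Hlq) as [E HE].
  exists (Rpower (Rabs E + 1) (/ (1 / r))). intros j L HL HF.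
  destruct (He j) as [S [[HS _] HeS]].
  assert (level_psum c s r j L <= S) by (apply HS; exists L; auto).
  assert (S <= Rpower (Rabs E + 1) (/ (1 / r))).
  { apply pw_le_bound; [apply Rdiv_lt_0_compat; lra|]. rewrite <- HeS. apply HE. }
  lra.
Qed.

Lemma besov_coef_bound d N s p q (c : wseq d) :
  ext_pos p -> ext_pos q -> in_besov N s p q c ->
  exists K, 0 < K /\ forall i j k, (i < N)%nat ->
    Cmod (c i j k) <= K * Rpower 2 ((d_over d p - s) * INR j).
Proof.
  intros Hp Hq Hb. destruct p as [r|]; simpl d_over.
  - destruct (besov_level_psum_bounded d N s r q c Hq Hp Hb) as [M HM].
    exists (Rpower (Rabs M + 1) (/ r)). split; [apply Rpower_gt0|]. intros i j k Hi.
    assert (Hone : pw (Cmod (c i j k) * Rpower 2 ((s - INR d / r) * INR j)) r + 0 <= M).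
    { apply (HM j ((i, k) :: nil)); repeat constructor; auto. }
    rewrite Rplus_0_r in Hone. apply pw_le_bound in Hone; [|auto].
    apply le_mult_Rpower2_inv in Hone.
    replace ((INR d / r - s) * INR j) with (- ((s - INR d / r) * INR j)) by ring.
    exact Hone.
  - destruct Hb as [e [He Hlq]]. destruct (in_lq_bounded q e Hq Hlq) as [E HE].
    exists (Rabs E + 1). split; [pose proof (Rabs_pos E); lra|]. intros i j k Hi.
    assert (Cmod (c i j k) * Rpower 2 (s * INR j) <= e j)
      by (apply (proj1 (He j)); exists i, k; auto).
    replace ((0 - s) * INR j) with (- (s * INR j)) by ring. apply le_mult_Rpower2_inv.
    pose proof (HE j). pose proof (Rle_abs E). lra.
Qed.

Lemma in_D_exponent_le d N (psi : wavelets d) (c : wseq d) a K g x :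
  0 < K -> bounded_wavelets N psi ->
  (forall i j k, (i < N)%nat -> Cmod (c i j k) <= K * Rpower 2 (a * INR j)) ->
  in_D N psi c g x -> g <= a.
Proof.
  intros HK [B HB] Hc [C [iN [jN [kN [HC [Hi [Hj Hge]]]]]]].
  destruct (Rle_or_lt g a) as [|Hga]; auto. exfalso.
  destruct (Rpower2_eventually_gt (g - a) (K * Rabs B / C) ltac:(lra)) as [J HJ].
  destruct (Hj J) as [n Hn]. specialize (HJ _ (Hn n (le_n _))). specialize (Hge n).
  set (j := jN n) in *. set (y := fun m => 2 ^ j * x m - IZR (kN n m)).
  rewrite Cmod_mult in Hge. change (wav psi (iN n) j (kN n) x) with (psi (iN n) y) in Hge.
  pose proof (Hc (iN n) j (kN n) (Hi n)). pose proof (HB (iN n) y (Hi n)).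
  pose proof (Rle_abs B).
  pose proof (Cmod_ge0 (c (iN n) j (kN n))). pose proof (Cmod_ge0 (psi (iN n) y)).
  replace (g * INR j) with ((g - a) * INR j + a * INR j) in Hge by ring.
  rewrite Rpower_plus in Hge.
  pose proof (Rpower_gt0 2 (a * INR j)). pose proof (Rpower_gt0 2 ((g - a) * INR j)).
  assert (K * Rabs B < C * Rpower 2 ((g - a) * INR j)).
  { apply (Rmult_lt_compat_l C) in HJ; [|lra]. field_simplify in HJ; lra. }
  assert (Cmod (c (iN n) j (kN n)) * Cmod (psi (iN n) y) <= K * Rpower 2 (a * INR j) * Rabs B)
    by (apply Rmult_le_compat; lra).
  nra.
Qed.

Lemma is_sup_Rbar_le (P : R -> Prop) v b :
  is_sup_Rbar P v -> (forall g, P g -> g <= b) -> Rbar_le v (Finite b).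
Proof. intros [_ Hleast] Hb. apply Hleast. exact Hb. Qed.

Lemma div_exp_le_besov d N (psi : wavelets d) s p q (c : wseq d) x v :
  bounded_wavelets N psi -> ext_pos p -> ext_pos q -> in_besov N s p q c ->
  is_div_exp N psi c x v -> Rbar_le v (Finite (d_over d p - s)).
Proof.
  intros Hbw Hp Hq Hb Hv. destruct (besov_coef_bound d N s p q c Hp Hq Hb) as [K [HK Hc]].
  apply (is_sup_Rbar_le _ v _ Hv). intros g.
  apply (in_D_exponent_le d N psi c _ K); auto.
Qed.

Lemma is_sup_Rbar_exists (P : R -> Prop) : exists v, is_sup_Rbar P v.
Proof.
  destruct (classic (exists g, P g)) as [Hne|Hemp].
  - destruct (classic (exists b, forall g, P g -> g <= b)) as [[b Hb]|Hunb].
    + destruct (completeness P (ex_intro _ b Hb) Hne) as [m [Hub Hleast]].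
      exists (Finite m). split; [exact Hub|].
      intros [w| |] Hw; simpl; auto.
      destruct Hne as [g Hg]. exact (Hw g Hg).
    + exists p_infty. split; [simpl; auto|].
      intros [w| |] Hw; simpl; auto.
      * apply Hunb. exists w. exact Hw.
      * destruct Hne as [g Hg]. exact (Hw g Hg).
  - exists m_infty. split; [|simpl; auto].
    intros g Hg. exfalso. eauto.
Qed.

(* The infimum is taken through the supremum of the reflected set, which is bounded by [0]. *)
Lemma is_inf_Rbar_exists_le (S : R -> Prop) beta :
  (forall t, S t -> 0 < t) -> (forall t, beta < t -> S t) ->
  exists D, is_inf_Rbar S D /\ Rbar_le D (Finite beta).
Proof.
  intros Hpos Hall.
  set (S' := fun u => S (- u)).
  assert (Hb : bound S') by (exists 0; intros u Hu; apply Hpos in Hu; lra).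
  assert (Hne : exists u, S' u)
    by (exists (- (beta + 1)); unfold S'; rewrite Ropp_involutive; apply Hall; lra).
  destruct (completeness S' Hb Hne) as [m [Hub Hleast]].
  assert (HS' : forall g, S g -> S' (- g)) by (intros g Hg; unfold S'; rewrite Ropp_involutive; auto).
  exists (Finite (- m)). split; [split|].
  - intros g Hg. apply HS', Hub in Hg. simpl. lra.
  - intros [w| |] Hw; simpl; auto.
    + assert (m <= - w) by (apply Hleast; intros u Hu; specialize (Hw _ Hu); simpl in Hw; lra).
      lra.
    + apply (Hw (beta + 1)), Hall; lra.
  - simpl. destruct (Rle_or_lt (- m) beta) as [|Hlt]; auto. exfalso.
    assert (S' (- ((beta - m) / 2))) as Hmid by (apply HS', Hall; lra).
    apply Hub in Hmid. lra.
Qed.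

Definition list_sum_R {T} (g : T -> R) (l : list T) : R := fold_right (fun a acc => g a + acc) 0 l.

Lemma list_sum_R_app {T} g (l l' : list T) :
  list_sum_R g (l ++ l') = list_sum_R g l + list_sum_R g l'.
Proof. induction l as [|a l IH]; simpl; [lra|]. unfold list_sum_R in *; simpl. rewrite IH. ring. Qed.

Lemma list_sum_R_ge0 {T} (g : T -> R) l : (forall a, 0 <= g a) -> 0 <= list_sum_R g l.
Proof.
  intros Hg. induction l as [|a l IH]; simpl; [lra|].
  pose proof (Hg a). unfold list_sum_R in *. lra.
Qed.

Lemma sum_nth_le_list_sum_R {T} (g : option T -> R) :
  (forall o, 0 <= g o) -> g None = 0 ->
  forall l M, sum_f_R0 (fun m => g (nth m l None)) M <= list_sum_R g l.
Proof.
  intros Hg H0. induction l as [|a l IH]; intros M.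
  - rewrite (sum_eq _ (fun _ => 0)) by (intros [|m] _; auto).
    rewrite sum_cte. simpl. lra.
  - change (list_sum_R g (a :: l)) with (g a + list_sum_R g l).
    destruct M as [|M].
    + simpl. pose proof (list_sum_R_ge0 g l Hg). lra.
    + rewrite decomp_sum by lia. simpl. specialize (IH M). lra.
Qed.

Section ScaleEnumeration.

Variable d : nat.
Variable Ls : nat -> list (Rd d).

(* Each block starts with [None], so [scale_blocks J0 n] has length [> n] and
   [scale_enum J0] below reads every entry of every block exactly once. *)
Definition scale_block (j : nat) : list (option (Rd d * nat)) :=
  None :: map (fun y => Some (y, j)) (Ls j).

Fixpoint scale_blocks (J0 n : nat) : list (option (Rd d * nat)) :=
  match n with
  | O => scale_block J0
  | S n' => scale_blocks J0 n' ++ scale_block (J0 + S n')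
  end.

Definition scale_enum (J0 m : nat) : option (Rd d * nat) := nth m (scale_blocks J0 m) None.

Lemma scale_blocks_length J0 n : (n < length (scale_blocks J0 n))%nat.
Proof. induction n; simpl; [lia|]. rewrite length_app. simpl. lia. Qed.

Lemma scale_blocks_prefix J0 n n' :
  (n <= n')%nat -> exists l, scale_blocks J0 n' = scale_blocks J0 n ++ l.
Proof.
  induction 1 as [|n' _ [l Hl]]; [exists nil; rewrite app_nil_r; auto|].
  exists (l ++ scale_block (J0 + S n')). simpl. rewrite Hl, app_assoc. auto.
Qed.

Lemma scale_enum_nth J0 n m :
  (m < length (scale_blocks J0 n))%nat -> scale_enum J0 m = nth m (scale_blocks J0 n) None.
Proof.
  intros Hm. unfold scale_enum. destruct (le_lt_dec m n) as [Hmn|Hnm].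
  - destruct (scale_blocks_prefix J0 m n Hmn) as [l ->].
    rewrite app_nth1; auto. apply scale_blocks_length.
  - destruct (scale_blocks_prefix J0 n m ltac:(lia)) as [l ->]. rewrite app_nth1; auto.
Qed.

Lemma In_scale_blocks J0 n y j :
  In (Some (y, j)) (scale_blocks J0 n) <-> (J0 <= j <= J0 + n)%nat /\ In y (Ls j).
Proof.
  assert (Hblock : forall j', In (Some (y, j)) (scale_block j') <-> j = j' /\ In y (Ls j)).
  { intros j'. unfold scale_block. simpl. rewrite in_map_iff. split.
    - intros [H|[y' [E H]]]; [discriminate|]. inversion E; subst. auto.
    - intros [-> H]. right. exists y. auto. }
  induction n as [|n IH]; cbn [scale_blocks].
  - rewrite Hblock. split; [intros [-> H]; split; [lia|auto]|].
    intros [Hj H]. split; [lia|auto].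
  - rewrite in_app_iff, IH, Hblock. split.
    + intros [[Hj H]|[-> H]]; split; auto; lia.
    + intros [Hj H]. destruct (Nat.eq_dec j (J0 + S n)); [right|left]; split; auto; lia.
Qed.

Lemma scale_enum_complete J0 y j :
  (J0 <= j)%nat -> In y (Ls j) -> exists m, scale_enum J0 m = Some (y, j).
Proof.
  intros Hj Hy.
  assert (Hin : In (Some (y, j)) (scale_blocks J0 (j - J0)))
    by (apply In_scale_blocks; split; [lia|auto]).
  destruct (In_nth _ _ None Hin) as [m [Hm Hnth]].
  exists m. rewrite (scale_enum_nth J0 (j - J0)); auto.
Qed.

Lemma scale_enum_scale_ge J0 m y j : scale_enum J0 m = Some (y, j) -> (J0 <= j)%nat.
Proof.
  unfold scale_enum. intros Hm.
  assert (Hin : In (Some (y, j)) (scale_blocks J0 m))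
    by (rewrite <- Hm; apply nth_In, scale_blocks_length).
  apply In_scale_blocks in Hin. lia.
Qed.

Definition scale_weight (w : nat -> R) (o : option (Rd d * nat)) : R :=
  match o with Some (_, j) => w j | None => 0 end.

Lemma scale_enum_sum_le (w : nat -> R) J0 M :
  (forall j, 0 <= w j) ->
  sum_f_R0 (fun m => scale_weight w (scale_enum J0 m)) M
  <= sum_f_R0 (fun k => INR (length (Ls (J0 + k))) * w (J0 + k)%nat) M.
Proof.
  intros Hw.
  rewrite (sum_eq _ (fun m => scale_weight w (nth m (scale_blocks J0 M) None))).
  2:{ intros m Hm. f_equal. apply scale_enum_nth. pose proof (scale_blocks_length J0 M). lia. }
  eapply Rle_trans; [apply sum_nth_le_list_sum_R; auto; intros [[y j]|]; simpl; auto; lra|].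
  assert (Hblock : forall j, list_sum_R (scale_weight w) (scale_block j) = INR (length (Ls j)) * w j).
  { intros j. unfold scale_block, list_sum_R. induction (Ls j) as [|y l IH]; [simpl; lra|].
    cbn [map fold_right length scale_weight] in *. rewrite S_INR. lra. }
  right. induction M as [|M IH]; cbn [scale_blocks sum_f_R0].
  - rewrite Hblock, Nat.add_0_r. auto.
  - rewrite list_sum_R_app, IH, Hblock. auto.
Qed.

End ScaleEnumeration.

Lemma Rpower2_neg_eventually_le b K delta :
  0 < b -> 0 < delta ->
  exists J : nat, forall j : nat, (J <= j)%nat -> K * Rpower 2 (- (b * INR j)) <= delta.
Proof.
  intros Hb Hdelta. destruct (Rpower2_eventually_gt b (K / delta) Hb) as [J HJ].
  exists J. intros j Hj. specialize (HJ j Hj). rewrite Rpower_Ropp.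
  set (P := Rpower 2 (b * INR j)) in *. assert (HP : 0 < P) by apply Rpower_gt0.
  apply (Rmult_lt_compat_l delta) in HJ; [|lra].
  replace (delta * (K / delta)) with K in HJ by (field; lra).
  apply (Rmult_le_reg_r P); [lra|]. rewrite Rmult_assoc, Rinv_l by lra. lra.
Qed.

Lemma geometric_tail_small A q eps :
  0 <= A -> 0 < q < 1 -> 0 < eps ->
  exists J, forall J0 M, (J <= J0)%nat -> sum_f_R0 (fun k => A * q ^ (J0 + k)) M <= eps.
Proof.
  intros HA Hq Heps.
  destruct (pow_lt_1_zero q ltac:(rewrite Rabs_right; lra) (eps * (1 - q) / (A + 1))
              ltac:(apply Rdiv_lt_0_compat; nra)) as [J HJ].
  exists J. intros J0 M HJ0. specialize (HJ J0 HJ0).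
  rewrite Rabs_right in HJ by (left; apply pow_lt; lra).
  rewrite (sum_eq _ (fun k => q ^ k * (A * q ^ J0))) by (intros; rewrite pow_add; ring).
  rewrite <- scal_sum, tech3 by lra.
  pose proof (pow_lt q (S M) ltac:(lra)). pose proof (pow_lt q J0 ltac:(lra)).
  assert ((A + 1) * q ^ J0 < eps * (1 - q)).
  { replace (eps * (1 - q)) with ((A + 1) * (eps * (1 - q) / (A + 1))) by (field; lra).
    apply Rmult_lt_compat_l; lra. }
  apply (Rmult_le_reg_r (1 - q)); [lra|].
  replace (A * q ^ J0 * ((1 - q ^ S M) / (1 - q)) * (1 - q)) with ((1 - q ^ S M) * (A * q ^ J0))
    by (field; lra).
  assert (0 <= q ^ S M * (A * q ^ J0)) by (apply Rmult_le_pos; nra).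
  nra.
Qed.

Lemma H_null_of_scale_covers d (E : Rd d -> Prop) (Ls : nat -> list (Rd d)) (rho : nat -> R) t A q :
  0 <= A -> 0 < q < 1 -> (forall j, 0 <= rho j) ->
  (forall delta, 0 < delta ->
     exists J, forall j, (J <= j)%nat -> sqrt (INR d) * (2 * rho j) <= delta) ->
  (forall j, INR (length (Ls j)) * pw (sqrt (INR d) * (2 * rho j)) t <= A * q ^ j) ->
  (forall x, E x -> forall J, exists j, (J <= j)%nat /\
     exists y, In y (Ls j) /\ forall m, Rabs (x m - y m) <= rho j) ->
  H_null t E.
Proof.
  intros HA Hq Hrho Hsmall Hcount Hhit delta eps Hdelta Heps.
  set (diam := fun j => sqrt (INR d) * (2 * rho j)).
  destruct (Hsmall delta Hdelta) as [J1 HJ1].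
  destruct (geometric_tail_small A q eps HA Hq Heps) as [J2 HJ2].
  set (J0 := Nat.max J1 J2).
  exists (fun m x => match scale_enum d Ls J0 m with
                     | Some (y, j) => forall i, Rabs (x i - y i) <= rho j
                     | None => False end).
  exists (fun m => scale_weight d diam (scale_enum d Ls J0 m)).
  split; [|split; [|split]].
  - intros x Hx. destruct (Hhit x Hx J0) as [j [Hj [y [Hy Hxy]]]].
    destruct (scale_enum_complete d Ls J0 y j Hj Hy) as [m Hm]. exists m. rewrite Hm. exact Hxy.
  - intros m. destruct (scale_enum d Ls J0 m) as [[y j]|] eqn:Hm; simpl; [|lra].
    apply scale_enum_scale_ge in Hm. split; [|apply HJ1; lia].
    unfold diam. pose proof (sqrt_pos (INR d)). pose proof (Hrho j). nra.
  - intros m x x'. destruct (scale_enum d Ls J0 m) as [[y j]|]; simpl; [|tauto].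
    intros Hx Hx'. apply Rd_dist_le_cube; [pose proof (Hrho j); lra|].
    intros i. specialize (Hx i). specialize (Hx' i).
    replace (x i - x' i) with ((x i - y i) - (x' i - y i)) by ring.
    eapply Rle_trans; [apply Rabs_triang|]. rewrite Rabs_Ropp. lra.
  - intros M.
    rewrite (sum_eq _ (fun m => scale_weight d (fun j => pw (diam j) t) (scale_enum d Ls J0 m)))
      by (intros m _; destruct (scale_enum d Ls J0 m) as [[y j]|]; simpl; auto; apply pw_0).
    eapply Rle_trans; [apply scale_enum_sum_le; intros; apply pw_ge0|].
    eapply Rle_trans; [apply sum_Rle; intros k _; apply Hcount|].
    apply HJ2. lia.
Qed.

(* [A 2^(a j)] cubes of side [~ 2^(-b j)] at each scale: [a < t b] makes
   [sum_j A 2^(a j) 2^(-t b j)] converge, so its tails can be made small. *)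
Lemma H_null_of_dyadic_covers d (E : Rd d -> Prop) (Ls : nat -> list (Rd d)) t a b A R0 :
  0 < t -> 0 < b -> a < t * b -> 0 <= A -> 0 < R0 ->
  (forall j, INR (length (Ls j)) <= A * Rpower 2 (a * INR j)) ->
  (forall x, E x -> forall J, exists j, (J <= j)%nat /\ exists y, In y (Ls j) /\
     forall m, Rabs (x m - y m) <= R0 * Rpower 2 (- (b * INR j))) ->
  H_null t E.
Proof.
  intros Ht Hb Hab HA HR0 Hlen Hhit.
  set (K := 2 * R0 * (sqrt (INR d) + 1)).
  assert (HK : 0 < K) by (unfold K; pose proof (sqrt_pos (INR d)); nra).
  assert (Hdiam : forall j, 0 <= sqrt (INR d) * (2 * (R0 * Rpower 2 (- (b * INR j))))
                           <= K * Rpower 2 (- (b * INR j))).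
  { intros j. set (P := Rpower 2 (- (b * INR j))). pose proof (sqrt_pos (INR d)).
    assert (0 < R0 * P) by (apply Rmult_lt_0_compat; [lra|apply Rpower_gt0]).
    assert (0 <= sqrt (INR d) * (R0 * P)) by (apply Rmult_le_pos; lra).
    unfold K. split; nra. }
  apply (H_null_of_scale_covers d E Ls (fun j => R0 * Rpower 2 (- (b * INR j))) t
           (A * Rpower K t) (Rpower 2 (a - t * b))); auto.
  - pose proof (Rpower_gt0 K t). nra.
  - split; [apply Rpower_gt0|apply Rpower2_lt_1; lra].
  - intros j. pose proof (Rpower_gt0 2 (- (b * INR j))). nra.
  - intros delta Hdelta. destruct (Rpower2_neg_eventually_le b K delta Hb Hdelta) as [J HJ].
    exists J. intros j Hj. pose proof (Hdiam j). pose proof (HJ j Hj). lra.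
  - intros j. pose proof (Hlen j). pose proof (pos_INR (length (Ls j))).
    pose proof (Rpower_gt0 2 (- (b * INR j))).
    eapply Rle_trans.
    { apply Rmult_le_compat; [lra|apply pw_ge0|eassumption|].
      apply pw_le_compat; [lra|apply Hdiam]. }
    rewrite pw_Rpower by nra. rewrite <- Rpower_mult_distr, Rpower_mult by auto.
    rewrite <- Rpower2_mult_INR.
    replace ((a - t * b) * INR j) with (a * INR j + - (b * INR j) * t) by ring.
    rewrite Rpower_plus. right. ring.
Qed.

Definition Z_interval (K : nat) : list Z :=
  map (fun n => (Z.of_nat n - Z.of_nat K)%Z) (seq 0 (2 * K + 1)).

Definition Zd_cons {d} (z : Z) (k : Zd d) : Zd (S d) := fun i => Fin.caseS' i (fun _ => Z) z k.

Fixpoint Zd_box (d K : nat) : list (Zd d) :=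
  match d with
  | O => (fun _ => 0%Z) :: nil
  | S d' => flat_map (fun z => map (@Zd_cons d' z) (Zd_box d' K)) (Z_interval K)
  end.

Lemma Zd_box_length d K : length (Zd_box d K) = Nat.pow (2 * K + 1) d.
Proof.
  induction d as [|d IH]; simpl; auto.
  rewrite (flat_map_constant_length (c := Nat.pow (2 * K + 1) d))
    by (intros z _; rewrite length_map; auto).
  unfold Z_interval. rewrite length_map, length_seq. simpl. lia.
Qed.

Lemma In_Zd_box d K (k : Zd d) :
  (forall m, (- Z.of_nat K <= k m <= Z.of_nat K)%Z) -> In k (Zd_box d K).
Proof.
  revert k. induction d as [|d IH]; intros k Hk; simpl.
  - left. apply functional_extensionality. intros m. inversion m.
  - apply in_flat_map. exists (k Fin.F1). split.
    + unfold Z_interval. apply in_map_iff. exists (Z.to_nat (k Fin.F1 + Z.of_nat K)).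
      specialize (Hk Fin.F1). split; [lia|]. apply in_seq. lia.
    + apply in_map_iff. exists (fun i => k (Fin.FS i)). split; [|apply IH; intros m; apply Hk].
      apply functional_extensionality. intros m. pattern m. apply Fin.caseS'; reflexivity.
Qed.

Lemma dyadic_grid_approx d B (x : Rd d) J :
  exists j, (J <= j)%nat /\ exists k : Zd d, In k (Zd_box d (Nat.pow 2 ((B + 1) * j))) /\
    forall m, Rabs (x m - IZR (k m) / 2 ^ (B * j)) <= Rpower 2 (- (INR B * INR j)).
Proof.
  destruct (Rpower2_eventually_gt 1 (Rd_norm x + 1) ltac:(lra)) as [J1 HJ1].
  set (j := Nat.max J J1). exists j. split; [lia|].
  specialize (HJ1 j ltac:(lia)). rewrite Rmult_1_l, Rpower2_INR in HJ1.
  set (P := 2 ^ (B * j)).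
  assert (HP : 1 <= P) by (apply pow_R1_Rle; lra).
  set (k := fun m => (up (P * x m) - 1)%Z).
  assert (Hk : forall m, P * x m - 1 < IZR (k m) <= P * x m)
    by (intros m; unfold k; rewrite minus_IZR; destruct (archimed (P * x m)); lra).
  exists k. split.
  - apply In_Zd_box. intros m. specialize (Hk m).
    assert (HK : IZR (Z.of_nat (Nat.pow 2 ((B + 1) * j))) = P * 2 ^ j).
    { rewrite <- INR_IZR_INZ, pow_INR. unfold P. rewrite <- pow_add. simpl (INR 2).
      f_equal. lia. }
    pose proof (Rabs_coord_le_Rd_norm d x m).
    pose proof (Rle_abs (x m)). pose proof (Rle_abs (- x m)). rewrite Rabs_Ropp in *.
    pose proof (pow_R1_Rle 2 j ltac:(lra)).
    split; apply le_IZR; rewrite ?opp_IZR, HK; nra.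
  - intros m. specialize (Hk m).
    rewrite Rpower_Ropp, <- mult_INR, Rpower2_INR. fold P.
    replace (x m - IZR (k m) / P) with ((P * x m - IZR (k m)) * / P) by (field; lra).
    pose proof (Rinv_0_lt_compat P ltac:(lra)).
    rewrite Rabs_mult, (Rabs_right (/ P)), Rabs_right by lra. nra.
Qed.

Lemma H_null_gt_dim d (E : Rd d -> Prop) t : INR d < t -> H_null t E.
Proof.
  intros Ht. pose proof (pos_INR d).
  destruct (INR_unbounded (INR d / (t - INR d))) as [B HB].
  assert (0 <= INR d / (t - INR d))
    by (apply Rmult_le_pos; [lra|left; apply Rinv_0_lt_compat; lra]).
  assert (HB0 : 0 < INR B) by lra.
  assert (HBt : (INR B + 1) * INR d < t * INR B).
  { apply (Rmult_lt_compat_r (t - INR d)) in HB; [|lra].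
    replace (INR d / (t - INR d) * (t - INR d)) with (INR d) in HB by (field; lra). nra. }
  set (Ls := fun j => map (fun k : Zd d => (fun m => IZR (k m) / 2 ^ (B * j)) : Rd d)
                          (Zd_box d (Nat.pow 2 ((B + 1) * j)))).
  apply (H_null_of_dyadic_covers d E Ls t ((INR B + 1) * INR d) (INR B) (3 ^ d) 1); try lra.
  - apply pow_le; lra.
  - intros j. unfold Ls. rewrite length_map, Zd_box_length, pow_INR.
    set (K := INR (Nat.pow 2 ((B + 1) * j))).
    assert (HK : K = 2 ^ ((B + 1) * j)) by (unfold K; rewrite pow_INR; auto).
    assert (HK1 : 1 <= K) by (rewrite HK; apply pow_R1_Rle; lra).
    rewrite plus_INR, mult_INR. fold K. simpl (INR 2). simpl (INR 1).
    apply Rle_trans with ((3 * K) ^ d); [apply pow_incr; lra|].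
    rewrite Rpow_mult_distr. apply Rmult_le_compat_l; [apply pow_le; lra|].
    rewrite HK, <- pow_mult, <- Rpower2_INR. right. f_equal.
    rewrite !mult_INR, plus_INR. simpl (INR 1). ring.
  - intros x _ J. destruct (dyadic_grid_approx d B x J) as [j [Hj [k [Hk Hxk]]]].
    exists j. split; auto. exists (fun m => IZR (k m) / 2 ^ (B * j)). split.
    + apply in_map_iff. exists k. auto.
    + intros m. rewrite Rmult_1_l. apply Hxk.
Qed.

Lemma exists_complete_list {T} (P : T -> Prop) (K : nat) :
  (forall L, NoDup L -> Forall P L -> (length L <= K)%nat) ->
  exists L, NoDup L /\ Forall P L /\ forall a, P a -> In a L.
Proof.
  intros HK.
  assert (Hgrow : forall n L, NoDup L -> Forall P L -> (K - length L <= n)%nat ->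
            exists L, NoDup L /\ Forall P L /\ forall a, P a -> In a L).
  { induction n as [|n IH]; intros L HL HF Hn;
      destruct (classic (exists a, P a /\ ~ In a L)) as [[a [Ha Hna]]|Hno].
    - assert (length (a :: L) <= K)%nat by (apply HK; constructor; auto).
      simpl in *. lia.
    - exists L. repeat split; auto. intros a Ha. apply NNPP. eauto.
    - assert (length (a :: L) <= K)%nat by (apply HK; constructor; auto).
      apply (IH (a :: L)); try constructor; auto. simpl in *. lia.
    - exists L. repeat split; auto. intros a Ha. apply NNPP. eauto. }
  apply (Hgrow K nil); [constructor|constructor|simpl; lia].
Qed.

Lemma level_psum_ge_count d (c : wseq d) s r j T L :
  0 < r -> 0 <= T -> Forall (fun ik => T <= Cmod (c (fst ik) j (snd ik))) L ->
  INR (length L) * pw (T * Rpower 2 ((s - INR d / r) * INR j)) r <= level_psum c s r j L.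
Proof.
  intros Hr HT. induction L as [|ik L IH]; intros HF; [simpl; lra|].
  inversion HF as [|? ? Hik HL]; subst. specialize (IH HL).
  change (length (ik :: L)) with (S (length L)). rewrite S_INR.
  unfold level_psum in *. cbn [fold_right].
  assert (pw (T * Rpower 2 ((s - INR d / r) * INR j)) r
          <= pw (Cmod (c (fst ik) j (snd ik)) * Rpower 2 ((s - INR d / r) * INR j)) r).
  { apply pw_le_compat; auto. pose proof (Rpower_gt0 2 ((s - INR d / r) * INR j)). split; nra. }
  lra.
Qed.

Lemma besov_large_coef_count d N s r q (c : wseq d) :
  0 < r -> ext_pos q -> in_besov N s (ext_fin r) q c ->
  exists M, 0 <= M /\ forall j T L, 0 < T -> NoDup L ->
    Forall (fun ik => (fst ik < N)%nat /\ T <= Cmod (c (fst ik) j (snd ik))) L ->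
    INR (length L) <= M * Rpower (T * Rpower 2 ((s - INR d / r) * INR j)) (- r).
Proof.
  intros Hr Hq Hb. destruct (besov_level_psum_bounded d N s r q c Hq Hr Hb) as [M HM].
  assert (HM0 : 0 <= M) by (specialize (HM 0%nat nil (NoDup_nil _) (Forall_nil _)); simpl in HM; lra).
  exists M. split; auto. intros j T L HT HL HF.
  set (u := T * Rpower 2 ((s - INR d / r) * INR j)).
  assert (Hu : 0 < u) by (unfold u; pose proof (Rpower_gt0 2 ((s - INR d / r) * INR j)); nra).
  assert (Hcount : INR (length L) * Rpower u r <= M).
  { rewrite <- pw_Rpower by auto. eapply Rle_trans.
    - apply level_psum_ge_count; [auto|lra|]. eapply Forall_impl; [|exact HF]. intros ik [_ H]; exact H.
    - apply HM; auto. eapply Forall_impl; [|exact HF]. intros ik [H _]; exact H. }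
  pose proof (Rpower_gt0 u r). rewrite Rpower_Ropp.
  apply (Rmult_le_reg_r (Rpower u r)); [auto|]. rewrite Rmult_assoc, Rinv_l; lra.
Qed.

Lemma large_coef_lists d N s r q (c : wseq d) (T : nat -> R) :
  0 < r -> ext_pos q -> in_besov N s (ext_fin r) q c -> (forall j, 0 < T j) ->
  exists (M : R) (Ls : nat -> list (nat * Zd d)), 0 <= M /\ forall j,
    INR (length (Ls j)) <= M * Rpower (T j * Rpower 2 ((s - INR d / r) * INR j)) (- r) /\
    forall i k, (i < N)%nat -> T j <= Cmod (c i j k) -> In (i, k) (Ls j).
Proof.
  intros Hr Hq Hb HT. destruct (besov_large_coef_count d N s r q c Hr Hq Hb) as [M [HM0 HM]].
  set (P := fun j (ik : nat * Zd d) => (fst ik < N)%nat /\ T j <= Cmod (c (fst ik) j (snd ik))).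
  assert (Hex : forall j, {L | NoDup L /\ Forall (P j) L /\ forall ik, P j ik -> In ik L}).
  { intros j. apply constructive_indefinite_description.
    destruct (INR_unbounded (M * Rpower (T j * Rpower 2 ((s - INR d / r) * INR j)) (- r))) as [K HK].
    apply (exists_complete_list (P j) K). intros L HL HF.
    pose proof (HM j (T j) L (HT j) HL HF). apply INR_le. lra. }
  exists M, (fun j => proj1_sig (Hex j)). split; auto. intros j.
  destruct (Hex j) as [L [HL [HF Hall]]]; simpl. split.
  - apply HM; auto.
  - intros i k Hi Hc. apply (Hall (i, k)). split; auto.
Qed.

Lemma div_exp_ge_large_terms d N (psi : wavelets d) (c : wseq d) gamma g x :
  g < gamma -> (forall v, is_div_exp N psi c x v -> Rbar_le (Finite gamma) v) ->
  forall J, exists j, (J <= j)%nat /\ exists i k, (i < N)%nat /\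
    Rpower 2 (g * INR j) <= Cmod (c i j k) * Cmod (wav psi i j k x).
Proof.
  intros Hg Hx J.
  destruct (is_sup_Rbar_exists (fun g => in_D N psi c g x)) as [v Hv].
  assert (Hex : exists g', in_D N psi c g' x /\ g < g').
  { apply NNPP. intros Hno.
    assert (Rbar_le v (Finite g)).
    { apply (is_sup_Rbar_le _ v g Hv). intros g' Hg'.
      destruct (Rle_or_lt g' g); auto. exfalso; eauto. }
    specialize (Hx v Hv). destruct v; simpl in *; auto; lra. }
  destruct Hex as [g' [[C [iN [jN [kN [HC [Hi [Hj Hge]]]]]]] Hgg']].
  destruct (Rpower2_eventually_gt (g' - g) (/ C) ltac:(lra)) as [J' HJ'].
  destruct (Hj (Nat.max J J')) as [n Hn]. specialize (Hn n (le_n _)).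
  exists (jN n). split; [lia|]. exists (iN n), (kN n). split; auto.
  specialize (Hge n). rewrite Cmod_mult in Hge. specialize (HJ' (jN n) ltac:(lia)).
  replace (g' * INR (jN n)) with ((g' - g) * INR (jN n) + g * INR (jN n)) in Hge by ring.
  rewrite Rpower_plus in Hge. pose proof (Rpower_gt0 2 (g * INR (jN n))).
  assert (1 < C * Rpower 2 ((g' - g) * INR (jN n))).
  { apply (Rmult_lt_compat_l C) in HJ'; auto. rewrite Rinv_r in HJ'; lra. }
  nra.
Qed.

(* A term [|c psi_(j,k)(x)| >= 2^(g j)] with [|c| <= K 2^(a j)] forces
   [|psi(2^j x - k)| >= 2^(-(a - g) j) / K]; fast decay of order [n] with
   [n eta > a - g] then puts [2^j x - k] in the ball of radius [2^(eta j)]. *)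
Lemma large_term_localized d N (psi : wavelets d) (c : wseq d) K a g eta n Cn i j k x :
  0 < K ->
  (forall i (y : Rd d), (i < N)%nat -> Cmod (psi i y) <= Cn / (1 + Rd_norm y) ^ n) ->
  (i < N)%nat ->
  Cmod (c i j k) <= K * Rpower 2 (a * INR j) ->
  K * Rabs Cn < Rpower 2 ((INR n * eta - (a - g)) * INR j) ->
  Rpower 2 (g * INR j) <= Cmod (c i j k) * Cmod (wav psi i j k x) ->
  Rd_norm (fun m => 2 ^ j * x m - IZR (k m)) < Rpower 2 (eta * INR j).
Proof.
  intros HK Hdec Hi Hc HJ Hhit.
  set (y := fun m => 2 ^ j * x m - IZR (k m)) in *.
  destruct (Rlt_or_le (Rd_norm y) (Rpower 2 (eta * INR j))) as [|Hy]; auto. exfalso.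
  change (wav psi i j k x) with (psi i y) in Hhit.
  set (P := Rpower 2 (eta * INR j)) in *. assert (HP : 0 < P) by apply Rpower_gt0.
  assert (HPn : P ^ n = Rpower 2 (INR n * eta * INR j)).
  { unfold P. rewrite <- Rpower_pow by apply Rpower_gt0. rewrite Rpower_mult. f_equal. ring. }
  pose proof (pow_lt P n HP).
  pose proof (Cmod_ge0 (psi i y)). pose proof (Cmod_ge0 (c i j k)).
  assert (Hpsi : Cmod (psi i y) <= Rabs Cn / P ^ n).
  { pose proof (Hdec i y Hi) as Hp.
    assert (Hden : 0 < (1 + Rd_norm y) ^ n) by (apply pow_lt; lra).
    assert (HCn : 0 <= Cn).
    { destruct (Rle_or_lt 0 Cn); auto.
      assert (Cn / (1 + Rd_norm y) ^ n < 0)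
        by (apply Rmult_neg_pos; [lra|apply Rinv_0_lt_compat; lra]).
      lra. }
    eapply Rle_trans; [apply Hp|]. rewrite Rabs_right by lra.
    unfold Rdiv. apply Rmult_le_compat_l; [lra|].
    apply Rinv_le_contravar; [auto|apply pow_incr; lra]. }
  assert (Hup : Rpower 2 (g * INR j) <= K * Rpower 2 (a * INR j) * (Rabs Cn / P ^ n))
    by (eapply Rle_trans; [apply Hhit|]; apply Rmult_le_compat; auto).
  assert (Hsplit : Rpower 2 ((INR n * eta - (a - g)) * INR j) * Rpower 2 (a * INR j)
                   = P ^ n * Rpower 2 (g * INR j))
    by (rewrite HPn, <- !Rpower_plus; f_equal; ring).
  pose proof (Rpower_gt0 2 (a * INR j)).
  assert (Rpower 2 (g * INR j) * P ^ n <= K * Rpower 2 (a * INR j) * Rabs Cn).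
  { apply (Rmult_le_compat_r (P ^ n)) in Hup; [|lra].
    replace (K * Rpower 2 (a * INR j) * (Rabs Cn / P ^ n) * P ^ n)
      with (K * Rpower 2 (a * INR j) * Rabs Cn) in Hup by (field; lra).
    exact Hup. }
  nra.
Qed.

Lemma finite_dim_bound_ge0 d s r gamma :
  0 < r -> gamma <= - s + INR d / r -> 0 <= INR d - s * r - gamma * r.
Proof.
  intros Hr Hg. apply (Rmult_le_compat_r r) in Hg; [|lra].
  replace ((- s + INR d / r) * r) with (INR d - s * r) in Hg by (field; lra). lra.
Qed.

Lemma superlevel_near_large_coef d N (psi : wavelets d) (c : wseq d) gamma g a K b eta n Cn x :
  g < gamma -> 0 < K -> a - g < INR n * eta ->
  (forall i j k, (i < N)%nat -> Cmod (c i j k) <= K * Rpower 2 (a * INR j)) ->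
  (forall i y, (i < N)%nat -> Cmod (psi i y) <= Rpower 2 b) ->
  (forall i (y : Rd d), (i < N)%nat -> Cmod (psi i y) <= Cn / (1 + Rd_norm y) ^ n) ->
  (forall v, is_div_exp N psi c x v -> Rbar_le (Finite gamma) v) ->
  forall J, exists j, (J <= j)%nat /\ exists i k, (i < N)%nat /\
    Rpower 2 (g * INR j - b) <= Cmod (c i j k) /\
    forall m, Rabs (x m - IZR (k m) / 2 ^ j) <= Rpower 2 (- ((1 - eta) * INR j)).
Proof.
  intros Hg HK Hn Hc Hbw Hdec Hx J.
  destruct (Rpower2_eventually_gt (INR n * eta - (a - g)) (K * Rabs Cn) ltac:(lra)) as [J1 HJ1].
  destruct (div_exp_ge_large_terms d N psi c gamma g x Hg Hx (Nat.max J J1))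
    as [j [Hj [i [k [Hi Hhit]]]]].
  exists j. split; [lia|]. exists i, k. split; [auto|split].
  - pose proof (Hbw i (fun m => 2 ^ j * x m - IZR (k m)) Hi).
    pose proof (Cmod_ge0 (c i j k)). pose proof (Rpower_gt0 2 b).
    apply (Rmult_le_reg_r (Rpower 2 b)); [auto|].
    rewrite <- Rpower_plus. replace (g * INR j - b + b) with (g * INR j) by ring.
    eapply Rle_trans; [exact Hhit|]. apply Rmult_le_compat_l; auto.
  - pose proof (large_term_localized d N psi c K a g eta n Cn i j k x HK Hdec Hi
                  (Hc i j k Hi) (HJ1 j ltac:(lia)) Hhit) as Hloc.
    intros m. pose proof (Rabs_coord_le_Rd_norm d (fun m => 2 ^ j * x m - IZR (k m)) m) as Hm.
    simpl in Hm. assert (H2j : 0 < 2 ^ j) by (apply pow_lt; lra).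
    replace (x m - IZR (k m) / 2 ^ j) with ((2 ^ j * x m - IZR (k m)) * / 2 ^ j) by (field; lra).
    rewrite Rabs_mult, Rabs_inv, (Rabs_right (2 ^ j)) by lra.
    replace (- ((1 - eta) * INR j)) with (eta * INR j + - INR j) by ring.
    rewrite Rpower_plus, Rpower_Ropp, Rpower2_INR.
    apply Rmult_le_compat_r; [left; apply Rinv_0_lt_compat|]; lra.
Qed.

(* With [g = gamma - (t - beta)/(4 r)] and [eta = (t - beta)/(4 t)], the level-[j] centres
   number [<~ 2^((beta + (t - beta)/4) j)] and the cubes have side [~ 2^(-(1 - eta) j)],
   so the exponents satisfy [beta + (t - beta)/4 < t (1 - eta)]. *)
Lemma H_null_superlevel_finite d N (psi : wavelets d) s r q (c : wseq d) gamma t :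
  bounded_wavelets N psi -> fast_decay N psi -> 0 < r -> ext_pos q ->
  in_besov N s (ext_fin r) q c -> gamma <= - s + INR d / r ->
  INR d - s * r - gamma * r < t ->
  H_null t (fun x : Rd d => forall v, is_div_exp N psi c x v -> Rbar_le (Finite gamma) v).
Proof.
  intros [B HB] Hdec Hr Hq Hb Hg Ht.
  pose proof (finite_dim_bound_ge0 d s r gamma Hr Hg) as Hbeta.
  set (beta := INR d - s * r - gamma * r) in *.
  set (g := gamma - (t - beta) / (4 * r)).
  set (eta := (t - beta) / (4 * t)).
  set (a := INR d / r - s).
  assert (0 < (t - beta) / (4 * r)) by (apply Rdiv_lt_0_compat; lra).
  assert (Hgam : g < gamma) by (unfold g; lra).
  assert (Heta : 0 < eta) by (unfold eta; apply Rdiv_lt_0_compat; lra).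
  assert (Hag : 0 < a - g) by (unfold a; lra).
  destruct (besov_coef_bound d N s (ext_fin r) q c Hr Hq Hb) as [K [HK Hc]].
  simpl d_over in Hc. fold a in Hc.
  destruct (exists_Rpower2_ge B) as [b Hbound].
  destruct (INR_unbounded ((a - g) / eta)) as [n Hn].
  destruct (Hdec (S n) ltac:(lia)) as [Cn HCn].
  destruct (large_coef_lists d N s r q c (fun j => Rpower 2 (g * INR j - b)) Hr Hq Hb
              (fun j => Rpower_gt0 _ _)) as [M [Ls [HM0 HLs]]].
  apply (H_null_of_dyadic_covers d _
           (fun j => map (fun ik : nat * Zd d => (fun m => IZR (snd ik m) / 2 ^ j) : Rd d) (Ls j))
           t (- (g + s - INR d / r) * r) (1 - eta) (M * Rpower 2 (b * r)) 1).
  - lra.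
  - unfold eta. apply (Rmult_lt_reg_r (4 * t)); [lra|].
    replace ((1 - (t - beta) / (4 * t)) * (4 * t)) with (3 * t + beta) by (field; lra). lra.
  - replace (- (g + s - INR d / r) * r) with (beta + (t - beta) / 4) by (unfold g, beta; field; lra).
    replace (t * (1 - eta)) with (t - (t - beta) / 4) by (unfold eta; field; lra). lra.
  - pose proof (Rpower_gt0 2 (b * r)). nra.
  - lra.
  - intros j. rewrite length_map. eapply Rle_trans; [apply HLs|].
    rewrite <- Rpower_plus, Rpower_mult, Rmult_assoc, <- Rpower_plus.
    right. do 2 f_equal. ring.
  - intros x Hx J.
    assert (Hbw : forall i y, (i < N)%nat -> Cmod (psi i y) <= Rpower 2 b)
      by (intros i y Hi; pose proof (HB i y Hi); lra).
    assert (Hdecay : a - g < INR (S n) * eta).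
    { rewrite S_INR. apply (Rmult_lt_compat_r eta) in Hn; [|auto].
      replace ((a - g) / eta * eta) with (a - g) in Hn by (field; lra). nra. }
    destruct (superlevel_near_large_coef d N psi c gamma g a K b eta (S n) Cn x
                Hgam HK Hdecay Hc Hbw HCn Hx J) as [j [Hj [i [k [Hi [Hlarge Hnear]]]]]].
    exists j. split; auto. exists (fun m => IZR (k m) / 2 ^ j). split.
    + apply in_map_iff. exists (i, k). split; auto. apply HLs; auto.
    + intros m. rewrite Rmult_1_l. apply Hnear.
Qed.

Theorem mainTheorem2 (d N : nat) (psi : wavelets d) (s : R) (p q : ext) (c : wseq d) :
  (1 <= d)%nat -> (1 <= N)%nat ->
  bounded_wavelets N psi -> fast_decay N psi ->
  ext_pos p -> ext_pos q ->
  in_besov N s p q c ->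
  (forall (x : Rd d) (v : Rbar), is_div_exp N psi c x v ->
     Rbar_le v (Finite (d_over d p - s))) /\
  (forall gamma : R, - s <= gamma <= - s + d_over d p ->
     exists D : Rbar,
       is_Hdim (fun x : Rd d => forall v, is_div_exp N psi c x v -> Rbar_le (Finite gamma) v) D /\
       Rbar_le D (Finite (dim_bound d s p gamma))).
Proof.
  intros _ _ Hbw Hdec Hp Hq Hb. split.
  - intros x v. apply (div_exp_le_besov d N psi s p q c x v); auto.
  - intros gamma [Hlow Hhigh]. apply is_inf_Rbar_exists_le; [intros t [Ht _]; auto|].
    intros t Ht. destruct p as [r|]; simpl in *.
    + pose proof (finite_dim_bound_ge0 d s r gamma Hp Hhigh).
      split; [lra|]. apply (H_null_superlevel_finite d N psi s r q c gamma t); auto.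
    + pose proof (pos_INR d). split; [lra|]. apply H_null_gt_dim; auto.
Qed.
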